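(* Let $n$ be a positive integer, let $\lambda$ be an eigenvalue of the Fibonacci--Redheffer matrix $F_R(n)$, and let $\mathbf{x}=[x_i]_{i=1}^n$ be a corresponding eigenvector. Then $x_1\neq 0$.
   Context: The Fibonacci numbers are $F_1=F_2=1$, $F_n=F_{n-1}+F_{n-2}$ for $n\ge 3$. The Fibonacci--Redheffer matrix $F_R(n)=[F_R(i,j)]_{i,j=1}^n$ is defined by $F_R(i,j)=1$ if $j=1$; $F_R(i,j)=F_i$ if $i\mid j$; and $F_R(i,j)=0$ otherwise. An eigenvector for $\lambda$ is a nonzero vector $\mathbf{x}$ with $(F_R(n)-\lambda I_n)\mathbf{x}=\mathbf{0}$. *)

From HB Require Import structures.
From mathcomp Require Import all_boot all_order all_algebra.
Set Implicit Arguments. Unset Strict Implicit. Unset Printing Implicit Defensive.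
Import GRing.Theory Num.Theory.
Local Open Scope ring_scope.

Fixpoint fib (k : nat) : nat :=
  match k with
  | 0 => 0
  | 1 => 1
  | (m.+1 as k').+1 => fib k' + fib m
  end.

(* Fibonacci--Redheffer matrix of size n; the 0-based index i : 'I_n stands
   for the paper's 1-based index i+1. *)
Definition FR (R : nzRingType) (n : nat) : 'M[R]_n :=
  \matrix_(i < n, j < n)
    if (j.+1 == 1)%N then 1
    else if (i.+1 %| j.+1)%N then (fib i.+1)%:R else 0.

From HB Require Import structures.
From mathcomp Require Import all_boot all_order all_algebra.
Set Implicit Arguments. Unset Strict Implicit.
Import Order.TTheory GRing.Theory Num.Theory.
Local Open Scope ring_scope.

(* Suppose x_1 = 0 and normalize x so that its last nonzero coordinate x_m
   equals 1.  Since x_1 = 0, row i of F_R reads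
   F_i * (sum of the x_k over the multiples k of i) = lambda * x_i.
   Row m gives lambda = F_m; for 1 < i < m row i gives
   (F_m - F_i) x_i = F_i * (sum of the x_k over the proper multiples k of i),
   so downward induction shows that every x_i is nonnegative, as F_i < F_m.
   But row 1 says that the sum of all the x_i is 0, although it is at least
   x_m = 1. *)

Lemma fibSS k : fib k.+2 = (fib k.+1 + fib k)%N.
Proof. by case: k. Qed.

Lemma fib_gt0 k : (0 < fib k.+1)%N.
Proof.
elim/ltn_ind: k => [[|[|k]]] // IH.
by rewrite fibSS addn_gt0 IH.
Qed.

Lemma fib_ltn i j : (1 < i < j)%N -> (fib i < fib j)%N.
Proof.
case/andP=> i_gt1 lt_ij; have j_gt1 := ltn_trans i_gt1 lt_ij.
apply: (homo_ltn_in (D := [pred k | 1 < k]%N) ltn_trans) lt_ij => //.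
- by move=> a b a_gt1 _ c /andP[ac _]; apply: ltn_trans ac.
- move=> [|[|k]] // _ _.
  by rewrite (fibSS k.+1) -[X in (X < _)%N]addn0 ltn_add2l fib_gt0.
Qed.

Lemma dvdSS_ltn j k : (j.+1 %| k.+1)%N -> k != j -> (j < k)%N.
Proof.
by move=> /(dvdn_leq (ltn0Sn _)); rewrite ltnS ltn_neqAle eq_sym => -> ->.
Qed.

Lemma ord_down_ind N (P : 'I_N -> Prop) :
  (forall j : 'I_N, (forall k : 'I_N, (j < k)%N -> P k) -> P j) ->
  forall j, P j.
Proof.
move=> IH j; have [d] := ubnP (N - j); elim: d j => // d IHd j lt_d.
apply: IH => k jk; apply: IHd.
exact: leq_trans (ltn_sub2l (ltn_ord j) jk) lt_d.
Qed.

Lemma FR_mulmx_coord (R : nzRingType) n (x : 'cV[R]_n.+1) i :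
  x ord0 ord0 = 0 ->
  (FR R n.+1 *m x) i ord0 =
    (fib i.+1)%:R * \sum_(j < n.+1 | (i.+1 %| j.+1)%N) x j ord0.
Proof.
move=> x0; rewrite mxE mulr_sumr [RHS]big_mkcond.
apply: eq_bigr => -[[|j] lt_j] _.
  by rewrite (_ : Ordinal lt_j = ord0) ?x0 ?mulr0; [case: ifP | exact: val_inj].
by rewrite mxE /=; case: ifP; rewrite ?mul0r.
Qed.

Section EigenvectorWithVanishingFirstCoordinate.

Variables (R : numFieldType) (n : nat) (lambda : R) (x : 'cV[R]_n.+1).
Hypothesis x_eigen : FR R n.+1 *m x = lambda *: x.
Hypothesis x0 : x ord0 ord0 = 0.

Lemma eigen_coord (i : 'I_n.+1) :
  (fib i.+1)%:R * \sum_(j < n.+1 | (i.+1 %| j.+1)%N) x j ord0 =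
    lambda * x i ord0.
Proof. by rewrite -FR_mulmx_coord // x_eigen mxE. Qed.

Lemma coord_sum_eq0 : \sum_j x j ord0 = 0.
Proof.
have := eigen_coord ord0; rewrite x0 mulr0 mul1r => sum_eq0.
by rewrite -[RHS]sum_eq0; apply: eq_bigl => j; rewrite dvd1n.
Qed.

Variable m : 'I_n.+1.
Hypothesis xm1 : x m ord0 = 1.
Hypothesis x_gt_m : forall j : 'I_n.+1, (m < j)%N -> x j ord0 = 0.

Lemma eigenvalue_fib : lambda = (fib m.+1)%:R.
Proof.
have := eigen_coord m; rewrite xm1 mulr1 (bigD1 m) ?dvdnn //= xm1.
rewrite big1 ?addr0 ?mulr1 //.
by move=> j /andP[dvd_mj jm]; rewrite x_gt_m ?dvdSS_ltn.
Qed.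

Lemma coord_ge0 (j : 'I_n.+1) : 0 <= x j ord0.
Proof.
elim/ord_down_ind: j => j IH.
have [j0 | j_gt0] := posnP j.
  by rewrite (_ : j = ord0) ?x0 //; exact: val_inj.
case: (ltngtP j m) => [j_lt_m | m_lt_j | /val_inj ->];
  [| by rewrite x_gt_m | by rewrite xm1 ler01].
set T := \sum_(k < n.+1 | (j.+1 %| k.+1)%N && (k != j)) x k ord0.
have T_ge0 : 0 <= T.
  by apply: sumr_ge0 => k /andP[dvd_jk kj]; apply: IH; exact: dvdSS_ltn.
have Fjm : 0 < (fib m.+1)%:R - (fib j.+1)%:R :> R.
  by rewrite subr_gt0 ltr_nat fib_ltn // !ltnS j_gt0.
have row_j : ((fib m.+1)%:R - (fib j.+1)%:R) * x j ord0 = (fib j.+1)%:R * T.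
  apply/eqP; rewrite mulrBl subr_eq -eigenvalue_fib -eigen_coord.
  by rewrite (bigD1 j) ?dvdnn //= mulrDr addrC.
by rewrite -(pmulr_rge0 _ Fjm) row_j mulr_ge0 ?ler0n.
Qed.

Lemma coord_sum_gt0 : 0 < \sum_j x j ord0.
Proof.
rewrite (bigD1 m) //= xm1 ltr_wpDr ?ltr01 //.
by apply: sumr_ge0 => j _; apply: coord_ge0.
Qed.

End EigenvectorWithVanishingFirstCoordinate.

Theorem lemma2 (R : numClosedFieldType) (n : nat) (lambda : R)
    (x : 'cV[R]_n.+1) :
  x != 0 -> (FR R n.+1 - lambda%:M) *m x = 0 -> x ord0 ord0 != 0.
Proof.
move=> x_neq0 eig; apply/negP => /eqP x0.
have x_eigen : FR R n.+1 *m x = lambda *: x.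
  by apply/eqP; rewrite -subr_eq0 -mul_scalar_mx -mulmxBl eig.
have [i0 xi0] : exists i, x i ord0 != 0.
  by case/matrix0Pn: x_neq0 => i [j]; rewrite (ord1 j); exists i.
case: (@arg_maxnP _ i0 (fun i => x i ord0 != 0) val xi0) => m xm_neq0 m_last.
pose y := (x m ord0)^-1 *: x.
have y_coord j : y j ord0 = x j ord0 / x m ord0 by rewrite mxE mulrC.
have y_eigen : FR R n.+1 *m y = lambda *: y.
  by rewrite -scalemxAr x_eigen !scalerA mulrC.
have y0 : y ord0 ord0 = 0 by rewrite y_coord x0 mul0r.
have ym : y m ord0 = 1 by rewrite y_coord divff.
have y_gt_m (j : 'I_n.+1) : (m < j)%N -> y j ord0 = 0.
  move=> mj; rewrite y_coord; have [-> | xj] := eqVneq (x j ord0) 0.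
    by rewrite mul0r.
  by have := m_last j xj; rewrite /= leqNgt mj.
have := coord_sum_gt0 y_eigen y0 ym y_gt_m.
by rewrite (coord_sum_eq0 y_eigen y0) ltxx.
Qed.
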